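(* Let $(V,\langle\cdot\,,\cdot\rangle_V)$ be an admissible integral $\mathrm{Cl}_{r,s}$-module and $(U,\langle\cdot\,,\cdot\rangle_U)$ an admissible integral $\mathrm{Cl}_{4,4}$-module such that the representations $J_{y_j}\in\mathrm{End}(U)$ permute the integral basis of $U$ up to sign for all orthonormal generators $y_j$ of $\mathrm{Cl}_{4,4}$. Then $V\otimes U$ with the scalar product $\langle v\otimes u,v'\otimes u'\rangle=\langle v,v'\rangle_V\langle u,u'\rangle_U$ is (carries the structure of) an admissible integral $\mathrm{Cl}_{r+4,s+4}$-module.
   Context: A scalar product is a real symmetric non-degenerate bilinear form. $\mathrm{Cl}_{p,q}$ is the real Clifford algebra generated by $\mathbb R^{p,q}$ ($\mathbb R^{p+q}$ with quadratic form $x_1^2+\dots+x_p^2-x_{p+1}^2-\dots-x_{p+q}^2$) with relation $z^2=-\langle z,z\rangle\cdot1$; orthonormal generators $z_k$ satisfy $\langle z_k,z_l\rangle=0$ ($k\ne l$), $\langle z_k,z_k\rangle=\pm1$. A $\mathrm{Cl}_{p,q}$-module $V$ with representation $J$ is admissible if it carries a scalar product with $\langle J_zu,v\rangle_V=-\langle u,J_zv\rangle_V$ for all $z,u,v$; it is an admissible integral module if it has an integral basis, i.e. a basis $\{v_\alpha\}$ with $\langle v_\alpha,v_\beta\rangle_V=0$ ($\alpha\ne\beta$), $\langle v_\alpha,v_\alpha\rangle_V=\pm1$, and $\langle J_{z_k}v_\alpha,v_\beta\rangle_V\in\{1,-1,0\}$ for all orthonormal generators $z_k$ and all $\alpha,\beta$.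 An operator permutes a basis up to sign if it sends each basis vector to $\pm$ some basis vector. *)

From mathcomp Require Import all_boot all_order all_algebra.
From mathcomp Require Import reals.
From mathcomp Require Export mxtens.
Set Implicit Arguments. Unset Strict Implicit. Unset Printing Implicit Defensive.
Import Order.TTheory GRing.Theory Num.Theory.
Local Open Scope ring_scope.

Section CliffordDefs.
Variable R : realType.

(* <z_k, z_k> for the standard orthonormal generators z_k of R^{p,q}:
   +1 for the first p generators, -1 for the last q. *)
Definition csig (p q : nat) (k : 'I_(p + q)) : R := if (k < p)%N then 1 else -1.

Definition is_Cl_rep (p q n : nat) (J : 'I_(p + q) -> 'M[R]_n) : Prop :=
  (forall k, J k *m J k = - (csig k)%:M) /\
  (forall k l, k != l -> J k *m J l = - (J l *m J k)).

Definition Jz (p q n : nat) (J : 'I_(p + q) -> 'M[R]_n) (z : 'rV[R]_(p + q)) : 'M[R]_n :=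
  \sum_k z 0 k *: J k.

Definition is_scalar_product (n : nat) (S : 'M[R]_n) : Prop :=
  S^T = S /\ S \in unitmx.

Definition sp (n : nat) (S : 'M[R]_n) (u v : 'cV[R]_n) : R := (u^T *m S *m v) 0 0.

Definition admissible (p q n : nat) (J : 'I_(p + q) -> 'M[R]_n) (S : 'M[R]_n) : Prop :=
  is_Cl_rep J /\ is_scalar_product S /\
  forall z u v, sp S (Jz J z *m u) v = - sp S u (Jz J z *m v).

Definition integral_basis (p q n : nat) (J : 'I_(p + q) -> 'M[R]_n) (S : 'M[R]_n)
  (B : 'M[R]_n) : Prop :=
  B \in unitmx /\
  (forall a b, a != b -> sp S (col a B) (col b B) = 0) /\
  (forall a, sp S (col a B) (col a B) = 1 \/ sp S (col a B) (col a B) = -1) /\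
  (forall k a b, let x := sp S (J k *m col a B) (col b B) in x = 1 \/ x = -1 \/ x = 0).

Definition admissible_integral (p q n : nat) (J : 'I_(p + q) -> 'M[R]_n) (S : 'M[R]_n) : Prop :=
  admissible J S /\ exists B, integral_basis J S B.

Definition permutes_up_to_sign (n : nat) (A B : 'M[R]_n) : Prop :=
  forall a, exists b, A *m col a B = col b B \/ A *m col a B = - col b B.

End CliffordDefs.

From mathcomp Require Import all_boot all_order all_algebra.
From mathcomp Require Import reals mxtens zify.
Import GRing.Theory Num.Theory.
(** For a Clifford module with generators K_1, ..., K_(p+q), the volume element
    w = K_1 ... K_(p+q) satisfies w^2 = (-1)^(C(p+q,2)+p), w K_j = (-1)^(p+q-1) K_j w and
    w^T S = (-1)^(p+q+C(p+q,2)) S w; for Cl_{4,4} these give w^2 = 1, w anticommuting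
    with every K_j, and w self-adjoint.  Hence J_i (x) w on the generators of V and
    1 (x) K_j on those of U satisfy the Cl_{r+4,s+4} relations and are skew for the
    product form.  As a product of the K_j, w permutes the integral basis of U up to
    sign, so the tensor product of the integral bases of V and U is again integral. *)

Set Implicit Arguments. Unset Strict Implicit. Unset Printing Implicit Defensive.
Local Open Scope ring_scope.

Section ScalarProduct.
Variable R : realType.

Lemma sp_col n (S X Y : 'M[R]_n) a b :
  sp S (col a X) (col b Y) = (X^T *m S *m Y) a b.
Proof. by rewrite /sp !colE trmx_mul trmx_delta !mulmxA -rowE -!row_mul -colE !mxE. Qed.

Lemma sp_mul_col n (S A B : 'M[R]_n) a b :
  sp S (A *m col a B) (col b B) = (B^T *m A^T *m S *m B) a b.
Proof. by rewrite colE mulmxA -colE sp_col trmx_mul. Qed.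

Lemma sp_adjointP n (S A : 'M[R]_n) :
  (forall u v, sp S (A *m u) v = - sp S u (A *m v)) <-> A^T *m S = - (S *m A).
Proof.
split=> [adjA | skewA u v]; last first.
  by rewrite /sp trmx_mul -(mulmxA u^T) skewA mulmxN mulNmx !mulmxA mxE.
apply/matrixP => a b; have := adjA (delta_mx a 0) (delta_mx b 0).
rewrite -!col1 !colE !mulmxA -!colE !sp_col trmx_mul trmx1 !mulmx1 !mul1mx => ->.
by rewrite !mxE.
Qed.

Lemma Jz_delta p q n (J : 'I_(p + q) -> 'M[R]_n) k : Jz J (delta_mx 0 k) = J k.
Proof.
rewrite /Jz (bigD1 k) //= mxE !eqxx scale1r big1 ?addr0 // => i ik.
by rewrite mxE (negbTE ik) andbF scale0r.
Qed.

Lemma admissible_skew p q n (J : 'I_(p + q) -> 'M[R]_n) S :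
  admissible J S -> forall k, (J k)^T *m S = - (S *m J k).
Proof. by case=> _ [_ adjJ] k; apply/sp_adjointP; rewrite -Jz_delta. Qed.

Lemma skew_admissible p q n (J : 'I_(p + q) -> 'M[R]_n) S :
  is_Cl_rep J -> is_scalar_product S ->
  (forall k, (J k)^T *m S = - (S *m J k)) -> admissible J S.
Proof.
move=> HJ HS Jskew; do 2!split=> //; move=> z; apply/sp_adjointP.
rewrite /Jz raddf_sum mulmx_suml mulmx_sumr -sumrN; apply: eq_bigr => k _ /=.
by rewrite [(_ *: _)^T]linearZ /= -scalemxAl Jskew scalerN -scalemxAr.
Qed.

Definition sign_or_zero (x : R) : Prop := x = 1 \/ x = -1 \/ x = 0.

Lemma sign_or_zeroN x : sign_or_zero x -> sign_or_zero (- x).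
Proof. by case=> [->|[->|->]]; rewrite ?opprK ?oppr0; [right; left | left | right; right]. Qed.

Lemma sign_or_zeroM x y : sign_or_zero x -> sign_or_zero y -> sign_or_zero (x * y).
Proof.
case=> [->|[->|->]]; rewrite ?mul1r ?mulN1r ?mul0r;
  [by [] | exact: sign_or_zeroN | by right; right].
Qed.

Lemma integral_basis_gram p q n (J : 'I_(p + q) -> 'M[R]_n) S B a b :
  integral_basis J S B -> sign_or_zero (sp S (col a B) (col b B)).
Proof.
case=> _ [B_orth [B_norm _]]; have [<-|ab] := eqVneq a b.
  by case: (B_norm a) => ->; rewrite /sign_or_zero; auto.
by rewrite /sign_or_zero B_orth; auto.
Qed.

Lemma sp_permuted_col n (S A B : 'M[R]_n) a b :
  permutes_up_to_sign A B -> (forall a b, sign_or_zero (sp S (col a B) (col b B))) ->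
  sign_or_zero (sp S (A *m col a B) (col b B)).
Proof.
move=> AB gramB; have [c [->|->]] := AB a; first exact: gramB.
by rewrite /sp raddfN /= !mulNmx mxE; apply/sign_or_zeroN/gramB.
Qed.
End ScalarProduct.

Section CliffordProducts.
Variables (R : realType) (p q m : nat) (K : 'I_(p + q) -> 'M[R]_m).
Hypothesis Ksq : forall k, K k *m K k = - (csig R k)%:M.
Hypothesis Kac : forall k l, k != l -> K k *m K l = - (K l *m K k).

Definition cl_prod (s : seq 'I_(p + q)) : 'M[R]_m := foldr (fun j M => K j *m M) 1%:M s.

Lemma cl_prod_rcons s j : cl_prod (rcons s j) = cl_prod s *m K j.
Proof. by elim: s => [|i s IH] /=; rewrite ?mulmx1 ?mul1mx // IH mulmxA. Qed.

Lemma cl_prod_mulK s j :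
  cl_prod s *m K j = (-1) ^+ count (predC1 j) s *: (K j *m cl_prod s).
Proof.
elim: s => [|i s IH] /=; first by rewrite mul1mx mulmx1 scale1r.
rewrite -mulmxA IH -scalemxAr !mulmxA.
have [->|ij] := eqVneq i j; first by rewrite add0n.
by rewrite [K j *m K i]Kac 1?eq_sym // mulNmx exprS mulN1r scaleNr scalerN opprK.
Qed.

Lemma cl_prod_mul_rev s : cl_prod s *m cl_prod (rev s) = (\prod_(i <- s) - csig R i)%:M.
Proof.
elim: s => [|i s IH] /=; first by rewrite big_nil mulmx1.
rewrite rev_cons cl_prod_rcons big_cons -mulmxA !mulmxA -(mulmxA (K i)) IH.
rewrite -mulmxA mul_scalar_mx -scalemxAr Ksq -(raddfN (@scalar_mx _ _)) scale_scalar_mx.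
by rewrite mulrC.
Qed.

Lemma cl_prod_rev s : uniq s -> cl_prod (rev s) = (-1) ^+ 'C(size s, 2) *: cl_prod s.
Proof.
elim: s => [|i s IH] /=; first by rewrite scale1r.
case/andP=> i_s /IH {}IH.
have count_i : count (predC1 i) s = size s.
  by apply/eqP; rewrite -all_count; apply/allP => x xs /=; apply: contraNneq i_s => <-.
rewrite rev_cons cl_prod_rcons IH -scalemxAl cl_prod_mulK count_i.
by rewrite scalerA -exprD binS bin1 addnC.
Qed.

Lemma cl_prod_sq s : uniq s ->
  cl_prod s *m cl_prod s = ((-1) ^+ 'C(size s, 2) * \prod_(i <- s) - csig R i)%:M.
Proof.
move=> s_uniq; rewrite -scale_scalar_mx -cl_prod_mul_rev cl_prod_rev //.
by rewrite scalemxAr scalerA -expr2 sqrr_sign scale1r.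
Qed.

Lemma cl_prod_trmx_skew (S : 'M[R]_m) s :
  (forall k, (K k)^T *m S = - (S *m K k)) ->
  (cl_prod s)^T *m S = (-1) ^+ size s *: (S *m cl_prod (rev s)).
Proof.
move=> Kskew; elim: s => [|i s IH] /=; first by rewrite trmx1 mul1mx mulmx1 scale1r.
rewrite trmx_mul -mulmxA Kskew mulmxN mulmxA IH rev_cons cl_prod_rcons.
by rewrite -scalemxAl -mulmxA exprS mulN1r scaleNr.
Qed.

Lemma cl_prod_permutes (B : 'M[R]_m) s :
  (forall j, permutes_up_to_sign (K j) B) -> permutes_up_to_sign (cl_prod s) B.
Proof.
move=> KB; elim: s => [|i s IH] /= a; first by exists a; left; rewrite mul1mx.
have [b sb] := IH a; have [c Kc] := KB i b.
exists c; rewrite -mulmxA; case: sb => ->; rewrite ?mulmxN; case: Kc => ->;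
  rewrite ?opprK; by [left | right].
Qed.

Definition cl_volume : 'M[R]_m := cl_prod (enum 'I_(p + q)).

Lemma prod_csig : \prod_(i < p + q) - csig R i = (-1) ^+ p.
Proof.
rewrite big_split_ord /= (eq_bigr (fun=> -1)) => [|i _]; last by rewrite /csig /= ltn_ord.
rewrite prodr_const card_ord big1 ?mulr1 // => i _.
by rewrite /csig /= ltnNge leq_addr opprK.
Qed.

Lemma cl_volume_mulK j :
  cl_volume *m K j = (-1) ^+ (p + q).-1 *: (K j *m cl_volume).
Proof.
rewrite /cl_volume cl_prod_mulK; congr (_ ^+ _ *: _).
have := count_predC (pred1 j) (enum 'I_(p + q)).
rewrite count_uniq_mem ?enum_uniq // mem_enum size_enum_ord add1n => count_j.
by rewrite -[in RHS]count_j.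
Qed.

Lemma cl_volume_sq : cl_volume *m cl_volume = ((-1) ^+ ('C(p + q, 2) + p))%:M.
Proof.
by rewrite /cl_volume cl_prod_sq ?enum_uniq // size_enum_ord big_enum prod_csig exprD.
Qed.

Lemma cl_volume_trmx_skew (S : 'M[R]_m) :
  (forall k, (K k)^T *m S = - (S *m K k)) ->
  cl_volume^T *m S = (-1) ^+ (p + q + 'C(p + q, 2)) *: (S *m cl_volume).
Proof.
move=> Kskew; rewrite cl_prod_trmx_skew // cl_prod_rev ?enum_uniq //.
by rewrite size_enum_ord -scalemxAr scalerA -exprD.
Qed.
End CliffordProducts.

Section Cl44Volume.
Variables (R : realType) (m : nat) (K : 'I_(4 + 4) -> 'M[R]_m).
Hypothesis Ksq : forall k, K k *m K k = - (csig R k)%:M.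
Hypothesis Kac : forall k l, k != l -> K k *m K l = - (K l *m K k).

Lemma cl44_volume_sq : cl_volume K *m cl_volume K = 1%:M.
Proof. by rewrite cl_volume_sq // -signr_odd. Qed.

Lemma cl44_volume_anti j : cl_volume K *m K j = - (K j *m cl_volume K).
Proof. by rewrite cl_volume_mulK // -signr_odd expr1 scaleN1r. Qed.

Lemma cl44_volume_trmx (S : 'M[R]_m) :
  (forall k, (K k)^T *m S = - (S *m K k)) -> (cl_volume K)^T *m S = S *m cl_volume K.
Proof. by move=> Kskew; rewrite cl_volume_trmx_skew // -signr_odd scale1r. Qed.
End Cl44Volume.

(* Generators of R^{r+p,s+q}: the r positive ones of R^{r,s}, then the p positive ones of
   R^{p,q}, then the s negative ones of R^{r,s}, then the q negative ones of R^{p,q}. *)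
Section TensorIndex.
Variables (r s p q : nat).

Definition tens_index (k : 'I_((r + p) + (s + q))) : 'I_(r + s) + 'I_(p + q) :=
  match split k with
  | inl k1 => match split k1 with inl i => inl (lshift s i) | inr j => inr (lshift q j) end
  | inr k2 => match split k2 with inl i => inl (rshift r i) | inr j => inr (rshift p j) end
  end.

Lemma tens_index_inj : injective tens_index.
Proof.
move=> k l; rewrite /tens_index.
case: splitP => k1 ek; case: splitP => i ei; case: splitP => l1 el; case: splitP => j ej;
  move=> //= -[eij]; apply: val_inj => /=; have := ltn_ord i; have := ltn_ord j; lia.
Qed.

Lemma csig_tens_index (R : realType) k :
  csig R k = match tens_index k with inl i => csig R i | inr j => csig R j end.
Proof.
rewrite /tens_index /csig.
by case: splitP => k1 _; case: splitP => i _ /=; rewrite ?ltn_ord // ltnNge leq_addr.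
Qed.
End TensorIndex.

Section TensorProduct.
Variable R : realType.

Lemma tensNmx a b c d (A : 'M[R]_(a, b)) (B : 'M[R]_(c, d)) : (- A) *t B = - (A *t B).
Proof. by apply/matrixP => i j; rewrite !mxE mulNr. Qed.

Lemma tensmxN a b c d (A : 'M[R]_(a, b)) (B : 'M[R]_(c, d)) : A *t (- B) = - (A *t B).
Proof. by apply/matrixP => i j; rewrite !mxE mulrN. Qed.

Lemma tens_scalar_scalar n m (x y : R) : (x%:M : 'M_n) *t (y%:M : 'M_m) = (x * y)%:M.
Proof.
apply/matrixP => i j.
case: (mxtens_indexP i) => i1 i2; case: (mxtens_indexP j) => j1 j2.
rewrite tensmxE !mxE (can_eq (@mxtens_indexK _ _)) xpair_eqE.
by case: (i1 == j1); case: (i2 == j2); rewrite ?mulr1n ?mulr0n ?mulr0 ?mul0r.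
Qed.

Lemma tensmx_unitmx n m (A : 'M[R]_n) (B : 'M[R]_m) :
  A \in unitmx -> B \in unitmx -> A *t B \in unitmx.
Proof.
have unitmx0 (M : 'M[R]_0) : M \in unitmx by rewrite unitmxE det_mx00 unitr1.
case: n A => [|n] A; first by move=> *; apply: unitmx0.
case: m B => [|m] B; first by move=> *; move: (A *t B); rewrite muln0.
exact: tensmx_unit.
Qed.

Lemma sp_tens_mul_col n m (SV BV A : 'M[R]_n) (SU BU C : 'M[R]_m) a1 a2 b1 b2 :
  sp (SV *t SU) ((A *t C) *m col (mxtens_index (a1, a2)) (BV *t BU))
     (col (mxtens_index (b1, b2)) (BV *t BU))
  = sp SV (A *m col a1 BV) (col b1 BV) * sp SU (C *m col a2 BU) (col b2 BU).
Proof. by rewrite !sp_mul_col !trmx_tens !tensmx_mul tensmxE. Qed.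

Lemma sp_tens_col n m (SV BV : 'M[R]_n) (SU BU : 'M[R]_m) a1 a2 b1 b2 :
  sp (SV *t SU) (col (mxtens_index (a1, a2)) (BV *t BU)) (col (mxtens_index (b1, b2)) (BV *t BU))
  = sp SV (col a1 BV) (col b1 BV) * sp SU (col a2 BU) (col b2 BU).
Proof. by rewrite !sp_col !trmx_tens !tensmx_mul tensmxE. Qed.
End TensorProduct.

Section TensorModule.
Variables (R : realType) (r s p q n m : nat).
Variables (J : 'I_(r + s) -> 'M[R]_n) (K : 'I_(p + q) -> 'M[R]_m).
Variables (SV : 'M[R]_n) (SU : 'M[R]_m) (W : 'M[R]_m).
Hypothesis W_sq : W *m W = 1%:M.
Hypothesis W_anti : forall j, W *m K j = - (K j *m W).
Hypothesis W_trmx : W^T *m SU = SU *m W.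

Definition tens_rep (k : 'I_((r + p) + (s + q))) : 'M[R]_(n * m) :=
  match tens_index k with inl i => J i *t W | inr j => 1%:M *t K j end.

Lemma tens_rep_Cl : is_Cl_rep J -> is_Cl_rep K -> is_Cl_rep tens_rep.
Proof.
move=> [Jsq Jac] [Ksq Kac]; split=> [k | k l kl].
  rewrite /tens_rep (csig_tens_index R k); case: tens_index => [i|j].
    by rewrite tensmx_mul Jsq W_sq tensNmx tens_scalar_scalar mulr1.
  by rewrite tensmx_mul mulmx1 Ksq tensmxN tens_scalar_scalar mul1r.
have kl' : tens_index k != tens_index l by rewrite (inj_eq (@tens_index_inj _ _ _ _)).
rewrite /tens_rep; case: tens_index kl' => [i|j]; case: tens_index => [i'|j'] kl';
  rewrite !tensmx_mul ?mulmx1 ?mul1mx.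
- by rewrite Jac ?W_sq ?tensNmx.
- by rewrite W_anti tensmxN.
- by rewrite W_anti tensmxN opprK.
- by rewrite Kac ?tensmxN.
Qed.

Lemma tens_rep_skew :
  (forall i, (J i)^T *m SV = - (SV *m J i)) -> (forall j, (K j)^T *m SU = - (SU *m K j)) ->
  forall k, (tens_rep k)^T *m (SV *t SU) = - ((SV *t SU) *m tens_rep k).
Proof.
move=> Jskew Kskew k; rewrite /tens_rep; case: tens_index => [i|j].
  by rewrite trmx_tens !tensmx_mul Jskew W_trmx tensNmx.
by rewrite trmx_tens trmx1 !tensmx_mul mul1mx mulmx1 Kskew tensmxN.
Qed.

Lemma tens_rep_admissible :
  admissible J SV -> admissible K SU -> admissible tens_rep (SV *t SU).
Proof.
move=> admJ admK.
have [HJ [[SV_sym SV_unit] _]] := admJ; have [HK [[SU_sym SU_unit] _]] := admK.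
apply: skew_admissible; first exact: tens_rep_Cl.
  by split; [rewrite trmx_tens SV_sym SU_sym | exact: tensmx_unitmx].
by apply: tens_rep_skew; apply: admissible_skew.
Qed.

Lemma tens_rep_integral_basis BV BU :
  integral_basis J SV BV -> integral_basis K SU BU -> permutes_up_to_sign W BU ->
  integral_basis tens_rep (SV *t SU) (BV *t BU).
Proof.
move=> BVint BUint WBU.
have [BV_unit [BV_orth [BV_norm BV_J]]] := BVint.
have [BU_unit [BU_orth [BU_norm BU_K]]] := BUint.
split; first exact: tensmx_unitmx.
split.
  move=> a b; case: (mxtens_indexP a) => a1 a2; case: (mxtens_indexP b) => b1 b2 ab.
  rewrite sp_tens_col; have [a1b1|] := eqVneq a1 b1; last by move/BV_orth->; rewrite mul0r.
  by rewrite BU_orth ?mulr0 //; apply: contraNneq ab => <-; rewrite a1b1.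
split.
  move=> a; case: (mxtens_indexP a) => a1 a2; rewrite sp_tens_col.
  by case: (BV_norm a1) => ->; case: (BU_norm a2) => ->; rewrite ?mul1r ?mulN1r ?opprK; auto.
move=> k a b /=; case: (mxtens_indexP a) => a1 a2; case: (mxtens_indexP b) => b1 b2.
rewrite /tens_rep; case: tens_index => [i|j]; rewrite sp_tens_mul_col; apply: sign_or_zeroM.
- exact: BV_J.
- by apply: sp_permuted_col => // c d; apply: integral_basis_gram BUint.
- by rewrite mul1mx; apply: integral_basis_gram BVint.
- exact: BU_K.
Qed.
End TensorModule.

Theorem theorem7p3 (R : realType) (r s n m : nat)
  (J : 'I_(r + s) -> 'M[R]_n) (SV : 'M[R]_n)
  (K : 'I_(4 + 4) -> 'M[R]_m) (SU : 'M[R]_m) :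
  admissible_integral J SV ->
  admissible K SU ->
  (exists BU : 'M[R]_m, integral_basis K SU BU /\
     forall j, permutes_up_to_sign (K j) BU) ->
  exists L : 'I_((r + 4) + (s + 4)) -> 'M[R]_(n * m),
    admissible_integral L (SV *t SU).
Proof.
move=> [admJ [BV BVint]] admK [BU [BUint KBU]].
have [[Ksq Kac] _] := admK.
pose W := cl_volume K.
have W_sq : W *m W = 1%:M by exact: cl44_volume_sq.
have W_anti j : W *m K j = - (K j *m W) by exact: cl44_volume_anti.
have W_trmx : W^T *m SU = SU *m W by apply: cl44_volume_trmx => //; apply: admissible_skew.
exists (tens_rep J K W); split; first exact: tens_rep_admissible.
exists (BV *t BU); apply: tens_rep_integral_basis => //.
exact: cl_prod_permutes.
Qed.
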